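(* Let $n$ be even, $F\colon\mathbb F_2^n\to\mathbb F_2^n$ a quadratic APN function, and $\mathcal V_F=\{V_b\colon b\in\mathbb F_2^n\setminus\{0\},\ \dim(V_b)\ge1\}$. Then $|N_F|=|\mathcal V_F|$.
   Context: $\langle\cdot,\cdot\rangle$ is the standard dot product. $F$ is APN if for every $a\ne0$ and $c$, $F(x)+F(x+a)=c$ has at most 2 solutions; quadratic if each component $F_b(x)=\langle b,F(x)\rangle$ is a quadratic form plus an affine function. $F_b$ is bent if $|W_F(b,a)|=2^{n/2}$ for all $a$, where $W_F(b,a)=\sum_x(-1)^{F_b(x)+\langle x,a\rangle}$. $N_F=\{b\in\mathbb F_2^n\setminus\{0\}\colon F_b\text{ is not bent}\}$. With $D_{F,a}(x)=F(x)+F(x+a)$, $H_b=\{x:\langle b,x\rangle=0\}$, $\overline{H_b}=\{x:\langle b,x\rangle=1\}$: $T_b=\{a:\mathrm{Im}(D_{F,a})=H_b\}\cup\{0\}$, $\overline{T_b}=\{a:\mathrm{Im}(D_{F,a})=\overline{H_b}\}$, $V_b=T_b\cup\overline{T_b}$ (a linear subspace). *)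

From HB Require Import structures.
From mathcomp Require Import all_boot all_order all_algebra.
Set Implicit Arguments. Unset Strict Implicit. Unset Printing Implicit Defensive.
Import GRing.Theory Num.Theory.
Local Open Scope ring_scope.

Notation vec n := 'rV['F_2]_n.

Definition dot (n : nat) (b x : vec n) : 'F_2 := \sum_(i < n) b 0 i * x 0 i.

Definition comp (n : nat) (F : vec n -> vec n) (b : vec n) (x : vec n) : 'F_2 :=
  dot b (F x).

Definition APN (n : nat) (F : vec n -> vec n) : Prop :=
  forall a c : vec n, a != 0 -> (#|[set x : vec n | (F x + F (x + a) == c)%R]| <= 2)%N.

Definition quadratic (n : nat) (F : vec n -> vec n) : Prop :=
  forall b : vec n, exists (Q : 'M['F_2]_n) (l : vec n) (c : 'F_2),
    forall x : vec n,
      comp F b x = \sum_(i < n) \sum_(j < n) Q i j * x 0 i * x 0 j + dot l x + c.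

Definition walsh (n : nat) (F : vec n -> vec n) (b a : vec n) : int :=
  \sum_(x : vec n) (if comp F b x + dot x a == 0 then 1 else -1).

Definition bent_comp (n : nat) (F : vec n -> vec n) (b : vec n) : bool :=
  [forall a : vec n, `|walsh F b a| == (2 ^ (n./2))%:Z].

Definition NF (n : nat) (F : vec n -> vec n) : {set vec n} :=
  [set b : vec n | (b != 0) && ~~ bent_comp F b].

Definition imD (n : nat) (F : vec n -> vec n) (a : vec n) : {set vec n} :=
  [set F x + F (x + a) | x : vec n].

Definition Hb (n : nat) (b : vec n) : {set vec n} := [set x | dot b x == 0].
Definition Hbbar (n : nat) (b : vec n) : {set vec n} := [set x | dot b x == 1].

Definition Tb (n : nat) (F : vec n -> vec n) (b : vec n) : {set vec n} :=
  [set a | imD F a == Hb b] :|: [set 0].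
Definition Tbbar (n : nat) (F : vec n -> vec n) (b : vec n) : {set vec n} :=
  [set a | imD F a == Hbbar b].
Definition Vb (n : nat) (F : vec n -> vec n) (b : vec n) : {set vec n} :=
  Tb F b :|: Tbbar F b.

Definition setdim (n : nat) (S : {set vec n}) : nat := \dim (<< enum S >>%VS).

Definition calV (n : nat) (F : vec n -> vec n) : {set {set vec n}} :=
  [set Vb F b | b in [set b : vec n | (b != 0) && (1 <= setdim (Vb F b))%N]].

From Pilot Require Import Defs.
From mathcomp Require Import all_boot all_order all_algebra.
From mathcomp Require Import ring.
Set Implicit Arguments.
Unset Strict Implicit.
Unset Printing Implicit Defensive.

Import GRing.Theory Num.Theory.
Local Open Scope ring_scope.

(* For quadratic F every derivative D_u F_b is affine, with linear part the
   polar form x |-> B(x, u) of F_b.  Squaring the Walsh transform gives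
   W_F(b,a)^2 = sum_u (-1)^<u,a> sum_x (-1)^(D_u F_b(x)), and the inner sum
   vanishes unless D_u F_b is constant.  As F is APN, Im(D_u F) has exactly
   2^(n-1) elements for u <> 0, so D_u F_b is constant iff Im(D_u F) is H_b or
   its complement, i.e. iff u is a nonzero element of V_b.  Hence V_b = {0}
   gives W^2 = 2^n and F_b is bent (n even), while a nonzero u in V_b gives
   F_b(x + u) = F_b(x) + d and W_F(b,a) = 0 whenever <u,a> = d + 1.  Finally
   b |-> V_b is injective where V_b <> {0}: Im(D_u F) for a nonzero u in V_b
   is a level set of <b, .>, and a level set determines the linear form. *)

Lemma pchar_F2 : 2%N \in [pchar 'F_2]. Proof. exact: pchar_Fp. Qed.

Lemma F2P (z : 'F_2) : z = 0 \/ z = 1.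
Proof. by case: z => -[|[|]] // ?; [left|right]; apply: val_inj. Qed.

Lemma F2_eq_mod2 (s t r : 'F_2) : s = t + 2 * r -> s = t.
Proof. by rewrite pchar_Fp_0 // mul0r addr0. Qed.

Definition sgF2 (t : 'F_2) : int := if t == 0 then 1 else -1.

Lemma sgF2D s t : sgF2 (s + t) = sgF2 s * sgF2 t.
Proof.
by case: (F2P s) => ->; case: (F2P t) => ->;
  rewrite ?addr0 ?add0r ?(addrr_pchar2 pchar_F2) /sgF2 ?eqxx.
Qed.

Lemma sgF2_addr1 s : sgF2 (s + 1) = - sgF2 s.
Proof. by rewrite sgF2D /sgF2 /= mulrN1. Qed.

Lemma sum_eq0_shift_opp (V : finZmodType) (R : numDomainType) (h : V -> R) e :
  (forall x, h (x + e) = - h x) -> \sum_x h x = 0.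
Proof.
move=> hN; have shift : \sum_x h x = - \sum_x h x.
  rewrite [LHS](reindex_inj (addIr e)) -sumrN; exact: eq_bigr.
apply/eqP; rewrite -[_ == 0]/(false || _) -(mulrn_eq0 _ 2).
by rewrite mulr2n {2}shift addrN.
Qed.

Section QuadraticForm.
Variables (R : comNzRingType) (n : nat) (Q : 'M[R]_n).

Definition qform (x : 'rV[R]_n) : R := \sum_i \sum_j Q i j * x 0 i * x 0 j.

Definition polar (x y : 'rV[R]_n) : R :=
  \sum_i \sum_j Q i j * (x 0 i * y 0 j + y 0 i * x 0 j).

Lemma qform0 : qform 0 = 0.
Proof.
by rewrite /qform big1 // => i _; rewrite big1 // => j _; rewrite !mxE !mulr0.
Qed.

Lemma qformD x y : qform (x + y) = qform x + qform y + polar x y.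
Proof.
rewrite /qform /polar -!big_split /=; apply: eq_bigr => i _.
rewrite -!big_split /=; apply: eq_bigr => j _; rewrite !mxE; ring.
Qed.

Lemma polarDl x y z : polar (x + y) z = polar x z + polar y z.
Proof.
rewrite /polar -!big_split /=; apply: eq_bigr => i _.
rewrite -!big_split /=; apply: eq_bigr => j _; rewrite !mxE; ring.
Qed.

End QuadraticForm.

Section Hyperplanes.
Variable n : nat.
Implicit Types x y a b : vec n.

Lemma addvv x : x + x = 0.
Proof. by apply/matrixP => i j; rewrite !mxE addrr_pchar2 // pchar_F2. Qed.

Lemma dotDl x y a : dot (x + y) a = dot x a + dot y a.
Proof. by rewrite /dot -big_split; apply: eq_bigr => i _; rewrite mxE mulrDl. Qed.

Lemma dotDr b x y : dot b (x + y) = dot b x + dot b y.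
Proof. by rewrite /dot -big_split; apply: eq_bigr => i _; rewrite mxE mulrDr. Qed.

Lemma dot0l x : dot 0 x = 0.
Proof. by rewrite /dot big1 // => i _; rewrite mxE mul0r. Qed.

Lemma dot0r b : dot b 0 = 0.
Proof. by rewrite /dot big1 // => i _; rewrite mxE mulr0. Qed.

Lemma dot_delta x i : dot x (delta_mx 0 i) = x 0 i.
Proof.
rewrite /dot (bigD1 i) //= big1 => [|j /negbTE ji]; rewrite mxE ?ji ?eqxx.
  by rewrite mulr1 addr0.
by rewrite mulr0.
Qed.

Lemma dot_surj a t : a != 0 -> exists y, dot a y = t.
Proof.
move=> a_nz; have [i /eqP ai|a0] := pickP (fun i => a 0 i == 1); last first.
  case/eqP: a_nz; apply/matrixP => i j; rewrite (ord1 i) mxE.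
  by case: (F2P (a 0 j)) => // aj; move: (a0 j); rewrite aj eqxx.
case: (F2P t) => ->; first by exists 0; rewrite dot0r.
by exists (delta_mx 0 i); rewrite dot_delta.
Qed.

Lemma level_set_inj b1 b2 t1 t2 :
  [set x | dot b1 x == t1] = [set x | dot b2 x == t2] -> b1 = b2.
Proof.
move=> /setP E; have := E 0; rewrite !inE !dot0r => t12.
apply/matrixP => i j; rewrite (ord1 i).
have := E (delta_mx 0 j); rewrite !inE !dot_delta.
by move: t12; case: (F2P t1) => ->; case: (F2P t2) => ->;
  case: (F2P (b1 0 j)) => ->; case: (F2P (b2 0 j)) => ->.
Qed.

Lemma card_vec : #|{: vec n}| = (2 ^ n)%N.
Proof. by rewrite card_mx card_Fp // mul1n. Qed.

Lemma card_level_set b t : b != 0 -> (#|[set x | dot b x == t]| * 2 = 2 ^ n)%N.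
Proof.
move=> b_nz; have [y by1] := dot_surj 1 b_nz.
pose L s := [set x | dot b x == s].
have LC s : ~: L s = L (s + 1).
  by apply/setP => x; rewrite !inE; case: (F2P s) => ->; case: (F2P (dot b x)) => ->.
have Ltr s : L (s + 1) = [set x + y | x in L s].
  apply/setP => x; rewrite !inE; apply/idP/imsetP => [/eqP bx | [z]].
    exists (x + y); last by rewrite -addrA addvv addr0.
    by rewrite inE dotDr bx by1 -addrA (addrr_pchar2 pchar_F2) addr0.
  by rewrite inE => /eqP bz ->; rewrite dotDr bz by1.
rewrite -card_vec -(cardsC (L t)) LC Ltr card_imset; last exact: addIr.
by rewrite muln2 addnn.
Qed.

End Hyperplanes.

Lemma setdim_gt0 n (S : {set vec n}) : (0 < setdim S)%N = ~~ (S \subset [set 0]).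
Proof.
rewrite lt0n dimv_eq0 -subv0; apply/idP/idP => [S_nz | /subsetPn[x xS]].
  apply: contra S_nz => /subsetP S0; apply/span_subvP => x.
  by rewrite mem_enum => /S0; rewrite inE => /eqP->; rewrite mem0v.
rewrite inE => x_nz; apply: contra x_nz => /subvP/(_ x).
by rewrite memv0; apply; rewrite memv_span // mem_enum.
Qed.

Section QuadraticAPN.
Variables (n : nat) (F : vec n -> vec n).
Hypotheses (quadF : quadratic F) (apnF : APN F).
Implicit Types x a b u : vec n.

(* [Defs.comp] is qualified because [comp] alone is ssrfun's composition. *)

Lemma card_imD a : a != 0 -> (#|imD F a| * 2 = 2 ^ n)%N.
Proof.
move=> a_nz; have -> : (2 ^ n = \sum_(x : vec n) 1)%N by rewrite sum1_card card_vec.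
rewrite (partition_big (fun x => F x + F (x + a)) (mem (imD F a))) /=; last first.
  by move=> x _; apply: imset_f.
rewrite -sum_nat_const; apply: eq_bigr => _ /imsetP[x0 _ ->].
rewrite sum1dep_card; apply/eqP; rewrite eqn_leq apnF // andbT.
have x0_neq : x0 != x0 + a by rewrite eq_sym -subr_eq0 [x0 + a]addrC addrK.
have /subset_leq_card :
    [set x0; x0 + a] \subset [set x | F x + F (x + a) == F x0 + F (x0 + a)].
  apply/subsetP => x; rewrite !inE => /orP[] /eqP ->; first by [].
  by rewrite -addrA addvv addr0 addrC.
by rewrite cards2 x0_neq.
Qed.

Lemma VbE a b :
  a != 0 -> (a \in Vb F b) = [exists t, imD F a == [set x | dot b x == t]].
Proof.
move=> a_nz; rewrite !inE (negbTE a_nz) orbF; apply/idP/existsP => [/orP[] E | [t]].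
- by exists 0.
- by exists 1.
- by case: (F2P t) => -> ->; rewrite ?orbT.
Qed.

Lemma VbP a b : a != 0 -> b != 0 ->
  reflect (exists d, forall x, Defs.comp F b x + Defs.comp F b (x + a) = d)
          (a \in Vb F b).
Proof.
move=> a_nz b_nz; rewrite VbE //; apply: (iffP existsP) => [[d /eqP E] | [d D_d]].
  exists d => x; rewrite /Defs.comp -dotDr; apply/eqP.
  have : F x + F (x + a) \in imD F a by apply: imset_f.
  by rewrite E inE.
exists d; rewrite eqEcard; apply/andP; split.
  by apply/subsetP => _ /imsetP[x _ ->]; rewrite inE dotDr D_d.
by rewrite -(leq_pmul2r (isT : 0 < 2)%N) card_imD // card_level_set.
Qed.

Lemma Vb_inj b1 b2 :
  ~~ (Vb F b1 \subset [set 0]) -> Vb F b1 = Vb F b2 -> b1 = b2.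
Proof.
case/subsetPn => a aV1; rewrite inE => a_nz V12.
have aV2 : a \in Vb F b2 by rewrite -V12.
move: aV1 aV2; rewrite !VbE // => /existsP[t1 /eqP E1] /existsP[t2 /eqP E2].
by apply: (level_set_inj (t1 := t1) (t2 := t2)); rewrite -E1 -E2.
Qed.

Lemma quadratic_derivE b : exists Q : 'M_n, forall x u,
  Defs.comp F b x + Defs.comp F b (x + u)
  = polar Q x u + (Defs.comp F b 0 + Defs.comp F b u).
Proof.
have [Q [l [c compE]]] := quadF b; exists Q => x u.
rewrite !compE -!/(qform Q _) !qformD qform0 !dotDr dot0r.
by apply: (F2_eq_mod2 (r := qform Q x + dot l x)); ring.
Qed.

Lemma walsh_sqrE b a : walsh F b a ^+ 2 =
  \sum_u sgF2 (dot u a) * \sum_x sgF2 (Defs.comp F b x + Defs.comp F b (x + u)).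
Proof.
have walshE : walsh F b a = \sum_x sgF2 (Defs.comp F b x + dot x a) by [].
transitivity (\sum_x \sum_u sgF2 (dot u a) *
                     sgF2 (Defs.comp F b x + Defs.comp F b (x + u))).
  rewrite expr2 walshE mulr_suml; apply: eq_bigr => x _.
  rewrite mulr_sumr (reindex_inj (addrI x)); apply: eq_bigr => u _.
  rewrite -!sgF2D; congr sgF2; rewrite dotDl.
  by apply: (F2_eq_mod2 (r := dot x a)); ring.
by rewrite exchange_big; apply: eq_bigr => u _; rewrite mulr_sumr.
Qed.

Lemma autocorrelation_eq0 b u : b != 0 -> u != 0 -> u \notin Vb F b ->
  \sum_x sgF2 (Defs.comp F b x + Defs.comp F b (x + u)) = 0.
Proof.
move=> b_nz u_nz uNV; have [Q derivE] := quadratic_derivE b.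
under eq_bigr do rewrite derivE.
have [e /eqP Qeu | Q0] := pickP (fun e => polar Q e u == 1).
  by apply: (sum_eq0_shift_opp (e := e)) => x; rewrite polarDl Qeu addrAC sgF2_addr1.
case/VbP: uNV => //; exists (Defs.comp F b 0 + Defs.comp F b u) => x.
rewrite derivE; case: (F2P (polar Q x u)) => [-> | Qxu]; first by rewrite add0r.
by move: (Q0 x); rewrite Qxu eqxx.
Qed.

Lemma walsh_sqr_trivial_Vb b a : b != 0 -> Vb F b \subset [set 0] ->
  walsh F b a ^+ 2 = (2 ^ n)%:Z.
Proof.
move=> b_nz /subsetP V0.
rewrite walsh_sqrE (bigD1 0) //= [X in _ + X]big1 => [|u u_nz].
  rewrite addr0 dot0l /sgF2 eqxx mul1r.
  under eq_bigr do rewrite addr0 (addrr_pchar2 pchar_F2) eqxx.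
  by rewrite sumr_const card_vec natz.
rewrite autocorrelation_eq0 ?mulr0 //.
by apply: contra u_nz => /V0; rewrite inE.
Qed.

Lemma exists_walsh_eq0 b a : b != 0 -> a != 0 -> a \in Vb F b ->
  exists a', walsh F b a' = 0.
Proof.
move=> b_nz a_nz /VbP[] // d derivE; have [a' aa'] := dot_surj (d + 1) a_nz.
exists a'; rewrite -[walsh F b a']/(\sum_x sgF2 (Defs.comp F b x + dot x a')).
apply: (sum_eq0_shift_opp (e := a)) => x.
have -> : Defs.comp F b (x + a) = Defs.comp F b x + d.
  by rewrite -(derivE x) addKr_pchar2 // pchar_F2.
rewrite dotDl aa' -sgF2_addr1; congr sgF2.
by apply: (F2_eq_mod2 (r := d)); ring.
Qed.

Lemma bent_compE b : ~~ odd n -> b != 0 -> bent_comp F b = (Vb F b \subset [set 0]).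
Proof.
move=> n_even b_nz; apply/idP/idP => [bentFb | V0].
  apply/subsetP => a aV; rewrite inE; apply: contraT => a_nz.
  have [a' walsh0] := exists_walsh_eq0 b_nz a_nz aV.
  by move/forallP/(_ a'): bentFb; rewrite walsh0 normr0 eq_sym -natz pnatr_eq0 expn_eq0.
apply/forallP => a; rewrite -(eqrXn2 (isT : 0 < 2)%N) ?normr_ge0 //.
rewrite real_normK ?num_real // walsh_sqr_trivial_Vb //.
by rewrite -!natz -natrX -expnM muln2 (even_halfK n_even).
Qed.

End QuadraticAPN.

Theorem mainTheorem3 (n : nat) (F : 'rV['F_2]_n -> 'rV['F_2]_n) :
  ~~ odd n -> quadratic F -> APN F -> #|NF F| = #|calV F|.
Proof.
move=> n_even quadF apnF.
set B := [set b : vec n | (b != 0) && (1 <= setdim (Vb F b))%N].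
have -> : NF F = B.
  apply/setP => b; rewrite !inE setdim_gt0; case: eqP => //= /eqP b_nz.
  by rewrite bent_compE.
rewrite card_in_imset // => b1 b2; rewrite !inE setdim_gt0 => /andP[_ nt1] _.
exact: Vb_inj.
Qed.
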